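(* For every integer $d\ge 3$, the space $\mathcal O_d$ is homotopy equivalent to the $2$-sphere $S^2$.
   Context: A polynomial map is a map $\phi:\mathbb R\to\mathbb R^3$ whose three component functions are real polynomials. A polynomial knot is a polynomial map which is a smooth embedding, i.e. $\phi$ is injective and $\phi'(t)\neq 0$ for all $t\in\mathbb R$. For an integer $d\ge 2$, $\mathcal A_d$ denotes the set of polynomial maps $t\mapsto (f(t),g(t),h(t))$ with $\deg f\le d-2$, $\deg g\le d-1$, $\deg h\le d$ (the zero polynomial is allowed and has degree $-\infty$). Writing $f(t)=\sum_{i=0}^{d-2}a_it^i$, $g(t)=\sum_{i=0}^{d-1}b_it^i$, $h(t)=\sum_{i=0}^{d}c_it^i$, the map $\eta:\mathcal A_d\to\mathbb R^{3d}$, $(f,g,h)\mapsto(a_0,\dots,a_{d-2},b_0,\dots,b_{d-1},c_0,\dots,c_d)$ is a bijection; $\mathcal A_d$ carries the metric $\rho(\phi,\psi)=\|\eta(\phi)-\eta(\psi)\|$ (Euclidean norm), so that $\eta$ is a homeomorphism, and all subsets of $\mathcal A_d$ carry the subspace topology. $\mathcal O_d$ is the set of all polynomial knots belonging to $\mathcal A_d$. *)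

From Stdlib Require Import Reals Lra.
Open Scope R_scope.

(* Points of R^n are represented as coefficient sequences x : nat -> R;
   only the coordinates x 0, ..., x (n-1) matter (sets below also require
   the remaining coordinates to vanish). *)

Fixpoint psum (n : nat) (g : nat -> R) : R :=
  match n with
  | O => 0
  | S k => psum k g + g k
  end.

Definition edist (n : nat) (x y : nat -> R) : R :=
  sqrt (psum n (fun i => (x i - y i) ^ 2)).

Definition inRn (n : nat) (x : nat -> R) : Prop :=
  forall i, (n <= i)%nat -> x i = 0.

Definition cont_on (n m : nat) (S : (nat -> R) -> Prop)
  (f : (nat -> R) -> (nat -> R)) : Prop :=
  forall x, S x -> forall eps, 0 < eps -> exists delta, 0 < delta /\
    forall y, S y -> edist n x y < delta -> edist m (f x) (f y) < eps.

Definition cont_on_I (n : nat) (S : (nat -> R) -> Prop)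
  (H : R -> (nat -> R) -> (nat -> R)) : Prop :=
  forall t x, 0 <= t <= 1 -> S x -> forall eps, 0 < eps -> exists delta, 0 < delta /\
    forall s y, 0 <= s <= 1 -> S y -> Rabs (t - s) < delta -> edist n x y < delta ->
      edist n (H t x) (H s y) < eps.

Definition homotopic_on (n : nat) (S : (nat -> R) -> Prop)
  (u v : (nat -> R) -> (nat -> R)) : Prop :=
  exists H : R -> (nat -> R) -> (nat -> R),
    cont_on_I n S H /\
    (forall t x, 0 <= t <= 1 -> S x -> S (H t x)) /\
    (forall x, S x -> H 0 x = u x) /\
    (forall x, S x -> H 1 x = v x).

Definition homotopy_equivalent (n : nat) (S : (nat -> R) -> Prop)
  (m : nat) (T : (nat -> R) -> Prop) : Prop :=
  exists (f g : (nat -> R) -> (nat -> R)),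
    (forall x, S x -> T (f x)) /\ (forall y, T y -> S (g y)) /\
    cont_on n m S f /\ cont_on m n T g /\
    homotopic_on n S (fun x => g (f x)) (fun x => x) /\
    homotopic_on m T (fun y => f (g y)) (fun y => y).

Definition sphere2 (x : nat -> R) : Prop :=
  inRn 3 x /\ x 0%nat ^ 2 + x 1%nat ^ 2 + x 2%nat ^ 2 = 1.

(* The coordinate vector eta(phi) = (a_0..a_{d-2}, b_0..b_{d-1}, c_0..c_d) is c;
   the components of the polynomial map phi = (f,g,h) it encodes: *)
Definition compf (d : nat) (c : nat -> R) (t : R) : R :=
  psum (d - 1) (fun i => c i * t ^ i).
Definition compg (d : nat) (c : nat -> R) (t : R) : R :=
  psum d (fun i => c (d - 1 + i)%nat * t ^ i).
Definition comph (d : nat) (c : nat -> R) (t : R) : R :=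
  psum (d + 1) (fun i => c (2 * d - 1 + i)%nat * t ^ i).

Definition is_poly_knot (d : nat) (c : nat -> R) : Prop :=
  (forall s t, compf d c s = compf d c t -> compg d c s = compg d c t ->
               comph d c s = comph d c t -> s = t) /\
  (forall t l1 l2 l3,
     derivable_pt_lim (compf d c) t l1 ->
     derivable_pt_lim (compg d c) t l2 ->
     derivable_pt_lim (comph d c) t l3 ->
     ~ (l1 = 0 /\ l2 = 0 /\ l3 = 0)).

Definition O_d (d : nat) (c : nat -> R) : Prop :=
  inRn (3 * d) c /\ is_poly_knot d c.

(* A polynomial knot phi has nonzero velocity phi'(0) = (a_1, b_1, c_1), so
   phi |-> phi'(0)/|phi'(0)| maps O_d to S^2; conversely a unit vector v gives
   the straight line t |-> t v, which lies in O_d.  The round trip starting on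
   S^2 is the identity.  Starting from phi it produces the unit-speed line in
   the direction of phi'(0), and this line is joined to phi inside O_d by the
   knots x |-> s phi(0) + (mu/s) (phi(s x) - phi(0)), 0 < s <= 1: they are
   affine reparametrisations of phi, and their coefficients s a_0 and
   mu s^(i-1) a_i (i >= 1) still make sense at s = 0, where they give the line
   x |-> mu phi'(0) x.  Choosing mu = (1 - s)/|phi'(0)| + s makes the path run
   from that unit-speed line to phi. *)

From Stdlib Require Import Reals Lra Lia FunctionalExtensionality.
Open Scope R_scope.

Ltac nat_cases := repeat match goal with
  | |- context [Nat.ltb ?a ?b] => destruct (Nat.ltb_spec a b); cbv iota
  | |- context [Nat.eqb ?a ?b] => destruct (Nat.eqb_spec a b); cbv iota
  end.

Lemma psum_ext n g h : (forall i, (i < n)%nat -> g i = h i) -> psum n g = psum n h.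
Proof.
  induction n as [|n IH]; intros Hgh; simpl; [reflexivity|].
  rewrite IH, Hgh; [reflexivity | lia | intros; apply Hgh; lia].
Qed.

Lemma psum_le n g h : (forall i, (i < n)%nat -> g i <= h i) -> psum n g <= psum n h.
Proof.
  induction n as [|n IH]; intros Hgh; simpl; [lra|].
  assert (psum n g <= psum n h) by (apply IH; intros; apply Hgh; lia).
  assert (g n <= h n) by (apply Hgh; lia).
  lra.
Qed.

Lemma psum_const n c : psum n (fun _ => c) = INR n * c.
Proof. induction n as [|n IH]; simpl psum; [simpl; ring|]. rewrite IH, S_INR; ring. Qed.

Lemma psum_term n g i :
  (forall j, (j < n)%nat -> 0 <= g j) -> (i < n)%nat -> g i <= psum n g.
Proof.
  intros Hg Hi.
  replace (g i) with (psum n (fun j => if Nat.eqb j i then g i else 0)).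
  - apply psum_le; intros j Hj; nat_cases; subst; [lra | apply Hg; lia].
  - clear Hg; induction n as [|n IH]; [lia|]; simpl.
    destruct (Nat.eq_dec i n) as [->|Hne].
    + rewrite Nat.eqb_refl, (psum_ext n _ (fun _ => 0)), psum_const;
        [ring | intros j Hj; nat_cases; [lia | reflexivity]].
    + rewrite IH by lia; nat_cases; [lia | ring].
Qed.

Lemma edist_coord n x y i : (i < n)%nat -> Rabs (x i - y i) <= edist n x y.
Proof.
  intros Hi; unfold edist.
  rewrite <- (sqrt_pow2 (Rabs (x i - y i))) by apply Rabs_pos.
  apply sqrt_le_1_alt; rewrite pow2_abs.
  apply (psum_term n (fun j => (x j - y j) ^ 2)); [intros; apply pow2_ge_0 | exact Hi].
Qed.

Lemma edist_bound m u v e : (forall i, (i < m)%nat -> Rabs (u i - v i) < e) ->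
  edist m u v <= INR m * e.
Proof.
  intros Huv; destruct m as [|m].
  { unfold edist; simpl; rewrite sqrt_0; lra. }
  assert (He : 0 < e) by (specialize (Huv 0%nat ltac:(lia)); pose proof (Rabs_pos (u 0%nat - v 0%nat)); lra).
  assert (Hm : 1 <= INR (S m)) by (rewrite S_INR; pose proof (pos_INR m); lra).
  unfold edist; rewrite <- (sqrt_pow2 (INR (S m) * e)) by nra.
  apply sqrt_le_1_alt, Rle_trans with (psum (S m) (fun _ => e ^ 2)).
  - apply psum_le; intros i Hi; rewrite <- pow2_abs.
    specialize (Huv i Hi); pose proof (Rabs_pos (u i - v i)); nra.
  - rewrite psum_const; nra.
Qed.

(* [N r] is the neighbourhood of radius [r] of a fixed base point, and [Lim F a]
   says that [F] tends to [a] at that point within [D]. *)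
Section Limits.
Variables (T : Type) (D : T -> Prop) (N : R -> T -> Prop).
Hypothesis N_mono : forall r1 r2 y, r1 <= r2 -> N r1 y -> N r2 y.

Definition Lim (F : T -> R) (a : R) : Prop :=
  forall eps, 0 < eps -> exists delta, 0 < delta /\
    forall y, D y -> N delta y -> Rabs (F y - a) < eps.

Lemma Lim_const c : Lim (fun _ => c) c.
Proof.
  intros e He; exists 1; split; [lra|]; intros.
  rewrite Rminus_diag, Rabs_R0; lra.
Qed.

Lemma Lim_both F G a b eps : Lim F a -> Lim G b -> 0 < eps -> exists delta, 0 < delta /\
  forall y, D y -> N delta y -> Rabs (F y - a) < eps /\ Rabs (G y - b) < eps.
Proof.
  intros HF HG He.
  destruct (HF eps He) as [d1 [Hd1 H1]], (HG eps He) as [d2 [Hd2 H2]].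
  exists (Rmin d1 d2); split; [apply Rmin_pos; lra|].
  intros y Dy Ny; split.
  - apply H1, (N_mono _ _ _ (Rmin_l d1 d2)); assumption.
  - apply H2, (N_mono _ _ _ (Rmin_r d1 d2)); assumption.
Qed.

Lemma Lim_plus F G a b : Lim F a -> Lim G b -> Lim (fun y => F y + G y) (a + b).
Proof.
  intros HF HG e He.
  destruct (Lim_both F G a b (e / 2) HF HG) as [d [Hd H]]; [lra|].
  exists d; split; [exact Hd|]; intros y Dy Ny.
  destruct (H y Dy Ny) as [H1 H2].
  replace (F y + G y - (a + b)) with ((F y - a) + (G y - b)) by ring.
  eapply Rle_lt_trans; [apply Rabs_triang | lra].
Qed.

Lemma Lim_mult F G a b : Lim F a -> Lim G b -> Lim (fun y => F y * G y) (a * b).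
Proof.
  intros HF HG e He.
  set (K := 1 + Rabs a + Rabs b).
  assert (HK : 1 <= K) by (unfold K; pose proof (Rabs_pos a); pose proof (Rabs_pos b); lra).
  set (e1 := Rmin 1 (e / (2 * K))).
  assert (He1 : 0 < e1) by (apply Rmin_pos; [lra | apply Rdiv_lt_0_compat; lra]).
  assert (He1K : e1 * K <= e / 2).
  { assert (e1 <= e / (2 * K)) by apply Rmin_r.
    replace (e / 2) with (e / (2 * K) * K) by (field; lra).
    apply Rmult_le_compat_r; lra. }
  assert (He11 : e1 <= 1) by apply Rmin_l.
  destruct (Lim_both F G a b e1 HF HG He1) as [d [Hd H]].
  exists d; split; [exact Hd|]; intros y Dy Ny.
  destruct (H y Dy Ny) as [H1 H2].
  replace (F y * G y - a * b)
    with ((F y - a) * (G y - b) + a * (G y - b) + b * (F y - a)) by ring.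
  eapply Rle_lt_trans; [apply Rabs_triang|].
  eapply Rle_lt_trans; [apply Rplus_le_compat_r, Rabs_triang|].
  rewrite !Rabs_mult; unfold K in He1K.
  pose proof (Rabs_pos a); pose proof (Rabs_pos b);
  pose proof (Rabs_pos (F y - a)); pose proof (Rabs_pos (G y - b)).
  nra.
Qed.

Lemma Lim_pow F a m : Lim F a -> Lim (fun y => F y ^ m) (a ^ m).
Proof. intros HF; induction m; simpl; [apply Lim_const | apply Lim_mult; assumption]. Qed.

Lemma Lim_comp F a h : Lim F a -> continuity_pt h a -> Lim (fun y => h (F y)) (h a).
Proof.
  intros HF Hh e He.
  destruct (Hh e He) as [r [Hr Hhr]], (HF r Hr) as [d [Hd HFd]].
  exists d; split; [exact Hd|]; intros y Dy Ny.
  destruct (Req_dec (F y) a) as [->|Hne].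
  - rewrite Rminus_diag, Rabs_R0; lra.
  - apply (Hhr (F y)); repeat split; [exact (not_eq_sym Hne) | apply HFd; assumption].
Qed.

Lemma Lim_vec (G : T -> nat -> R) (a : nat -> R) m eps :
  (forall i, (i < m)%nat -> Lim (fun y => G y i) (a i)) -> 0 < eps ->
  exists delta, 0 < delta /\
    forall y, D y -> N delta y -> forall i, (i < m)%nat -> Rabs (G y i - a i) < eps.
Proof.
  intros HG He; induction m as [|m IH].
  - exists 1; split; [lra | intros; lia].
  - destruct (IH ltac:(intros; apply HG; lia)) as [d1 [Hd1 H1]].
    destruct (HG m ltac:(lia) eps He) as [d2 [Hd2 H2]].
    exists (Rmin d1 d2); split; [apply Rmin_pos; lra|].
    intros y Dy Ny i Hi.
    destruct (Nat.eq_dec i m) as [->|Hne].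
    + apply H2, (N_mono _ _ _ (Rmin_r d1 d2)); assumption.
    + apply H1; [assumption | apply (N_mono _ _ _ (Rmin_l d1 d2)); assumption | lia].
Qed.

Lemma Lim_edist (G : T -> nat -> R) (a : nat -> R) m :
  (forall i, (i < m)%nat -> Lim (fun y => G y i) (a i)) ->
  forall eps, 0 < eps -> exists delta, 0 < delta /\
    forall y, D y -> N delta y -> edist m a (G y) < eps.
Proof.
  intros HG eps Heps.
  pose proof (pos_INR m) as Hm.
  destruct (Lim_vec G a m (eps / (INR m + 1)) HG) as [d [Hd H]];
    [apply Rdiv_lt_0_compat; lra|].
  exists d; split; [exact Hd|]; intros y Dy Ny.
  eapply Rle_lt_trans.
  - apply edist_bound; intros i Hi; rewrite Rabs_minus_sym; apply H; assumption.
  - apply Rmult_lt_reg_r with (INR m + 1); [lra|].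
    replace (INR m * (eps / (INR m + 1)) * (INR m + 1)) with (INR m * eps) by (field; lra).
    lra.
Qed.

End Limits.

Definition nbhd (n : nat) (x : nat -> R) (r : R) (y : nat -> R) : Prop :=
  edist n x y < r.

Definition nbhdI (n : nat) (t : R) (x : nat -> R) (r : R) (p : R * (nat -> R)) : Prop :=
  Rabs (t - fst p) < r /\ edist n x (snd p) < r.

Lemma nbhd_mono n x r1 r2 y : r1 <= r2 -> nbhd n x r1 y -> nbhd n x r2 y.
Proof. unfold nbhd; lra. Qed.

Lemma nbhdI_mono n t x r1 r2 p : r1 <= r2 -> nbhdI n t x r1 p -> nbhdI n t x r2 p.
Proof. unfold nbhdI; intros ? []; split; lra. Qed.

Lemma Lim_coord n x S i : (i < n)%nat -> Lim (nat -> R) S (nbhd n x) (fun y => y i) (x i).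
Proof.
  intros Hi e He; exists e; split; [exact He|]; intros y _ Hy.
  rewrite Rabs_minus_sym; eapply Rle_lt_trans; [apply edist_coord, Hi | exact Hy].
Qed.

Lemma Lim_coordI n t x S i : (i < n)%nat ->
  Lim (R * (nat -> R)) S (nbhdI n t x) (fun p => snd p i) (x i).
Proof.
  intros Hi e He; exists e; split; [exact He|]; intros p _ [_ Hp].
  rewrite Rabs_minus_sym; eapply Rle_lt_trans; [apply edist_coord, Hi | exact Hp].
Qed.

Lemma Lim_timeI n t x S : Lim (R * (nat -> R)) S (nbhdI n t x) fst t.
Proof.
  intros e He; exists e; split; [exact He|]; intros p _ [Hp _].
  rewrite Rabs_minus_sym; exact Hp.
Qed.

Lemma cont_on_coords n m S f :
  (forall x, S x -> forall i, (i < m)%nat ->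
     Lim (nat -> R) S (nbhd n x) (fun y => f y i) (f x i)) ->
  cont_on n m S f.
Proof.
  intros Hf x Sx.
  exact (Lim_edist _ S (nbhd n x) (nbhd_mono n x) f (f x) m (Hf x Sx)).
Qed.

Lemma cont_on_I_coords n S H :
  (forall t x, 0 <= t <= 1 -> S x -> forall i, (i < n)%nat ->
     Lim (R * (nat -> R)) (fun p => 0 <= fst p <= 1 /\ S (snd p)) (nbhdI n t x)
       (fun p => H (fst p) (snd p) i) (H t x i)) ->
  cont_on_I n S H.
Proof.
  intros HH t x Ht Sx eps Heps.
  destruct (Lim_edist _ _ (nbhdI n t x) (nbhdI_mono n t x) (fun p => H (fst p) (snd p))
              (H t x) n (HH t x Ht Sx) eps Heps) as [d [Hd Hnear]].
  exists d; split; [exact Hd|]; intros s y Hs Sy Hts Hxy.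
  exact (Hnear (s, y) (conj Hs Sy) (conj Hts Hxy)).
Qed.

Lemma homotopic_on_id n S u : (forall x, S x -> u x = x) -> homotopic_on n S u (fun x => x).
Proof.
  intros Hu; exists (fun _ x => x); repeat split.
  - intros t x _ _ eps Heps; exists eps; split; [exact Heps | intros; assumption].
  - intros; assumption.
  - intros x Sx; symmetry; apply Hu, Sx.
Qed.

Definition peval (n : nat) (a : nat -> R) (t : R) : R := psum n (fun i => a i * t ^ i).

Lemma peval_derive n a t :
  derivable_pt_lim (peval n a) t (psum n (fun i => a i * (INR i * t ^ pred i))).
Proof.
  induction n as [|n IH]; simpl psum.
  - exact (derivable_pt_lim_const 0 t).
  - replace (a n * (INR n * t ^ pred n))
      with (0 * t ^ n + a n * (INR n * t ^ pred n)) by ring.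
    exact (derivable_pt_lim_plus _ _ t _ _ IH
      (derivable_pt_lim_mult (fct_cte (a n)) (fun y => y ^ n) t _ _
         (derivable_pt_lim_const (a n) t) (derivable_pt_lim_pow t n))).
Qed.

Lemma derivable_peval n a : derivable (peval n a).
Proof. intros t; exact (exist _ _ (peval_derive n a t)). Qed.

Lemma psum_only1 n g : (2 <= n)%nat -> (forall i, i <> 1%nat -> g i = 0) -> psum n g = g 1%nat.
Proof.
  intros Hn Hg; induction n as [|n IH]; [lia|]; simpl.
  destruct (Nat.eq_dec n 1) as [->|Hne].
  - simpl; rewrite (Hg 0%nat) by lia; ring.
  - rewrite IH, (Hg n) by lia; ring.
Qed.

Lemma peval_derive0 n a : (2 <= n)%nat -> derivable_pt_lim (peval n a) 0 (a 1%nat).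
Proof.
  intros Hn; pose proof (peval_derive n a 0) as H.
  rewrite psum_only1 in H; [| exact Hn | intros [|[|i]] Hi; simpl; [ring | lia | ring]].
  simpl in H; rewrite !Rmult_1_r in H; exact H.
Qed.

Lemma peval_linear n a t : (2 <= n)%nat ->
  (forall i, (i < n)%nat -> i <> 1%nat -> a i = 0) -> peval n a t = a 1%nat * t.
Proof.
  intros Hn Ha; unfold peval.
  rewrite (psum_ext n _ (fun i => if Nat.eqb i 1 then a 1%nat * t else 0)).
  - rewrite psum_only1; [reflexivity | exact Hn | intros i Hi; nat_cases; [lia | reflexivity]].
  - intros i Hi; nat_cases; [subst; simpl; ring | rewrite Ha by assumption; ring].
Qed.

Definition rescale_weight (t m : R) (j : nat) : R :=
  match j with O => t | S k => m * t ^ k end.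

Lemma peval_rescale n a t m x : (1 <= n)%nat -> t <> 0 ->
  peval n (fun i => rescale_weight t m i * a i) x
  = (t - m / t) * a 0%nat + m / t * peval n a (t * x).
Proof.
  intros Hn Ht; destruct n as [|n]; [lia|]; clear Hn.
  induction n as [|n IH]; unfold peval in *; simpl psum in *.
  - simpl; field; exact Ht.
  - rewrite IH; simpl rescale_weight; rewrite Rpow_mult_distr; simpl; field; exact Ht.
Qed.

Definition injective_immersion (f g h : R -> R) : Prop :=
  (forall s t, f s = f t -> g s = g t -> h s = h t -> s = t) /\
  (forall t l1 l2 l3, derivable_pt_lim f t l1 -> derivable_pt_lim g t l2 ->
     derivable_pt_lim h t l3 -> ~ (l1 = 0 /\ l2 = 0 /\ l3 = 0)).

Lemma injective_immersion_speed_pos f g h t a b e : injective_immersion f g h ->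
  derivable_pt_lim f t a -> derivable_pt_lim g t b -> derivable_pt_lim h t e ->
  0 < a ^ 2 + b ^ 2 + e ^ 2.
Proof.
  intros [_ Himm] Da Db De.
  destruct (Rle_lt_dec (a ^ 2 + b ^ 2 + e ^ 2) 0) as [Hle|]; [exfalso | assumption].
  apply (Himm t a b e Da Db De).
  pose proof (pow2_ge_0 a); pose proof (pow2_ge_0 b); pose proof (pow2_ge_0 e).
  repeat split; nra.
Qed.

Lemma derive_linear a t : derivable_pt_lim (fun x => a * x) t a.
Proof.
  pose proof (derivable_pt_lim_scal id a t 1 (derivable_pt_lim_id t)) as H.
  rewrite Rmult_1_r in H; exact H.
Qed.

Lemma injective_immersion_linear a b e : 0 < a ^ 2 + b ^ 2 + e ^ 2 ->
  injective_immersion (fun t => a * t) (fun t => b * t) (fun t => e * t).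
Proof.
  intros Hpos; split.
  - intros s t E1 E2 E3.
    destruct (Req_dec s t) as [|Hne]; [assumption | exfalso].
    assert (Hst : s - t <> 0) by lra.
    assert (a = 0) by (apply (Rmult_eq_reg_r (s - t)); [lra | exact Hst]).
    assert (b = 0) by (apply (Rmult_eq_reg_r (s - t)); [lra | exact Hst]).
    assert (e = 0) by (apply (Rmult_eq_reg_r (s - t)); [lra | exact Hst]).
    subst; lra.
  - intros t l1 l2 l3 D1 D2 D3 [Z1 [Z2 Z3]].
    rewrite (uniqueness_limite _ _ _ _ D1 (derive_linear a t)) in Z1.
    rewrite (uniqueness_limite _ _ _ _ D2 (derive_linear b t)) in Z2.
    rewrite (uniqueness_limite _ _ _ _ D3 (derive_linear e t)) in Z3.
    subst; lra.
Qed.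

Lemma derive_rescale f t A k x L : derivable_pt_lim f (t * x) L ->
  derivable_pt_lim (fun y => A + k * f (t * y)) x (k * (L * t)).
Proof.
  intros HL; rewrite <- (Rplus_0_l (k * (L * t))).
  exact (derivable_pt_lim_plus (fct_cte A) _ x 0 _ (derivable_pt_lim_const A x)
    (derivable_pt_lim_scal _ k x _
       (derivable_pt_lim_comp (fun y => t * y) f x t L (derive_linear t x) HL))).
Qed.

Lemma injective_immersion_rescale f g h t k A B C :
  derivable f -> derivable g -> derivable h -> t <> 0 -> k <> 0 ->
  injective_immersion f g h ->
  injective_immersion (fun x => A + k * f (t * x)) (fun x => B + k * g (t * x))
    (fun x => C + k * h (t * x)).
Proof.
  intros Df Dg Dh Ht Hk [Hinj Himm]; split.
  - intros s u E1 E2 E3.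
    apply (Rmult_eq_reg_l t); [| exact Ht].
    apply Hinj; apply (Rmult_eq_reg_l k); lra.
  - intros x l1 l2 l3 D1 D2 D3 Hzero.
    destruct (Df (t * x)) as [L1 HL1], (Dg (t * x)) as [L2 HL2], (Dh (t * x)) as [L3 HL3].
    apply (Himm (t * x) L1 L2 L3 HL1 HL2 HL3).
    rewrite (uniqueness_limite _ _ _ _ D1 (derive_rescale _ _ _ _ _ _ HL1)),
      (uniqueness_limite _ _ _ _ D2 (derive_rescale _ _ _ _ _ _ HL2)),
      (uniqueness_limite _ _ _ _ D3 (derive_rescale _ _ _ _ _ _ HL3)) in Hzero.
    assert (Hcancel : forall L, k * (L * t) = 0 -> L = 0).
    { intros L HL; destruct (Rmult_integral _ _ HL) as [|HLt]; [contradiction|].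
      destruct (Rmult_integral _ _ HLt); [assumption | contradiction]. }
    destruct Hzero as [Z1 [Z2 Z3]]; auto.
Qed.

Section Knots.
Variable d : nat.
Hypothesis Hd : (3 <= d)%nat.

(* The linear coefficients a_1, b_1, c_1 sit at positions 1, d, 2d of eta(phi). *)
Definition speed2 (c : nat -> R) : R := c 1%nat ^ 2 + c d ^ 2 + c (2 * d)%nat ^ 2.

Definition speed (c : nat -> R) : R := sqrt (speed2 c).

Definition tangent_dir (c : nat -> R) : nat -> R := fun i =>
  match i with
  | O => c 1%nat / speed c
  | 1%nat => c d / speed c
  | 2%nat => c (2 * d)%nat / speed c
  | _ => 0
  end.

Definition line_coefs (y : nat -> R) : nat -> R := fun k =>
  if Nat.eqb k 1 then y 0%nat else if Nat.eqb k d then y 1%nat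
  else if Nat.eqb k (2 * d) then y 2%nat else 0.

Lemma speed2_pos c : O_d d c -> 0 < speed2 c.
Proof.
  intros [_ Hknot].
  pose proof (peval_derive0 d (fun i => c (d - 1 + i)%nat) ltac:(lia)) as Dg.
  pose proof (peval_derive0 (d + 1) (fun i => c (2 * d - 1 + i)%nat) ltac:(lia)) as Dh.
  cbv beta in Dg, Dh.
  replace (d - 1 + 1)%nat with d in Dg by lia.
  replace (2 * d - 1 + 1)%nat with (2 * d)%nat in Dh by lia.
  exact (injective_immersion_speed_pos _ _ _ 0 _ _ _ Hknot
           (peval_derive0 (d - 1) c ltac:(lia)) Dg Dh).
Qed.

Lemma speed_pos c : O_d d c -> 0 < speed c.
Proof. intros Hc; apply sqrt_lt_R0, speed2_pos; assumption. Qed.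

Lemma tangent_dir_sphere c : O_d d c -> sphere2 (tangent_dir c).
Proof.
  intros Hc; pose proof (speed2_pos c Hc) as Hp; split.
  - intros [|[|[|i]]] Hi; [lia | lia | lia | reflexivity].
  - simpl tangent_dir; unfold speed.
    pose proof (pow2_sqrt (speed2 c) ltac:(lra)) as Hsq.
    assert (sqrt (speed2 c) <> 0) by (apply Rgt_not_eq, sqrt_lt_R0, Hp).
    unfold Rdiv; rewrite !Rpow_mult_distr, pow_inv, Hsq.
    change (d + (d + 0))%nat with (2 * d)%nat.
    unfold speed2 in Hp |- *; field; lra.
Qed.

Lemma line_coefs_components y t :
  compf d (line_coefs y) t = y 0%nat * t /\ compg d (line_coefs y) t = y 1%nat * t /\
  comph d (line_coefs y) t = y 2%nat * t.
Proof.
  change (compf d (line_coefs y) t) with (peval (d - 1) (line_coefs y) t).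
  change (compg d (line_coefs y) t) with (peval d (fun i => line_coefs y (d - 1 + i)%nat) t).
  change (comph d (line_coefs y) t)
    with (peval (d + 1) (fun i => line_coefs y (2 * d - 1 + i)%nat) t).
  repeat split; rewrite peval_linear; unfold line_coefs; nat_cases;
    solve [lia | reflexivity | intros i Hi Hi1; nat_cases; lia || reflexivity].
Qed.

Lemma line_coefs_Od y : sphere2 y -> O_d d (line_coefs y).
Proof.
  intros [_ Hy]; split.
  - intros k Hk; unfold line_coefs; nat_cases; [lia | lia | lia | reflexivity].
  - unfold is_poly_knot.
    replace (compf d (line_coefs y)) with (fun t => y 0%nat * t)
      by (extensionality t; symmetry; apply line_coefs_components).
    replace (compg d (line_coefs y)) with (fun t => y 1%nat * t)
      by (extensionality t; symmetry; apply line_coefs_components).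
    replace (comph d (line_coefs y)) with (fun t => y 2%nat * t)
      by (extensionality t; symmetry; apply line_coefs_components).
    apply injective_immersion_linear; lra.
Qed.

Lemma tangent_dir_line_coefs y : sphere2 y -> tangent_dir (line_coefs y) = y.
Proof.
  intros [Hy3 Hy].
  assert (Hspeed : speed (line_coefs y) = 1).
  { unfold speed, speed2, line_coefs; nat_cases; try lia.
    rewrite <- sqrt_1; f_equal; lra. }
  extensionality i; destruct i as [|[|[|i]]]; simpl tangent_dir; rewrite ?Hspeed;
    unfold line_coefs; change (d + (d + 0))%nat with (2 * d)%nat; nat_cases; try lia;
    rewrite ?Rdiv_1_r; try reflexivity.
  symmetry; apply Hy3; lia.
Qed.

(* The exponent of t whose coefficient is stored at position k of eta(phi). *)
Definition coef_deg (k : nat) : nat :=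
  if Nat.ltb k (d - 1) then k
  else if Nat.ltb k (2 * d - 1) then (k - (d - 1))%nat
  else (k - (2 * d - 1))%nat.

Definition straighten_speed (t : R) (c : nat -> R) : R := (1 - t) / speed c + t.

Definition straighten (t : R) (c : nat -> R) : nat -> R :=
  fun k => rescale_weight t (straighten_speed t c) (coef_deg k) * c k.

Lemma straighten_speed_pos t c : O_d d c -> 0 <= t <= 1 ->
  0 < straighten_speed t c.
Proof.
  intros Hc Ht; pose proof (speed_pos c Hc) as Hs; unfold straighten_speed.
  assert (0 < / speed c) by (apply Rinv_0_lt_compat, Hs).
  unfold Rdiv; nra.
Qed.

Lemma straighten_components t c x : t <> 0 ->
  let m := straighten_speed t c in
  compf d (straighten t c) x = (t - m / t) * c 0%nat + m / t * compf d c (t * x) /\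
  compg d (straighten t c) x = (t - m / t) * c (d - 1)%nat + m / t * compg d c (t * x) /\
  comph d (straighten t c) x = (t - m / t) * c (2 * d - 1)%nat + m / t * comph d c (t * x).
Proof.
  intros Ht m.
  assert (Ef : compf d (straighten t c) x
               = peval (d - 1) (fun i => rescale_weight t m i * c i) x).
  { apply psum_ext; intros i Hi; unfold straighten, coef_deg; do 3 f_equal; nat_cases; lia. }
  assert (Eg : compg d (straighten t c) x
               = peval d (fun i => rescale_weight t m i * c (d - 1 + i)%nat) x).
  { apply psum_ext; intros i Hi; unfold straighten, coef_deg; do 3 f_equal; nat_cases; lia. }
  assert (Eh : comph d (straighten t c) x
               = peval (d + 1) (fun i => rescale_weight t m i * c (2 * d - 1 + i)%nat) x).
  { apply psum_ext; intros i Hi; unfold straighten, coef_deg; do 3 f_equal; nat_cases; lia. }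
  rewrite Ef, Eg, Eh, !peval_rescale, !Nat.add_0_r by (lia || exact Ht).
  repeat split.
Qed.

Lemma rescale_weight_0 m j : rescale_weight 0 m j = if Nat.eqb j 1 then m else 0.
Proof. destruct j as [|[|j]]; simpl; ring. Qed.

Lemma straighten_0 c : O_d d c -> straighten 0 c = line_coefs (tangent_dir c).
Proof.
  intros [Hc3 _].
  assert (Hm : straighten_speed 0 c = / speed c) by (unfold straighten_speed, Rdiv; ring).
  extensionality k; unfold straighten, line_coefs; rewrite rescale_weight_0, Hm.
  destruct (Nat.lt_ge_cases k (3 * d)) as [Hk|Hk].
  - unfold coef_deg; simpl tangent_dir; change (d + (d + 0))%nat with (2 * d)%nat.
    nat_cases; try lia; subst; unfold Rdiv; ring.
  - rewrite Hc3 by exact Hk; nat_cases; try lia; ring.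
Qed.

Lemma straighten_1 c : straighten 1 c = c.
Proof.
  assert (Hm : straighten_speed 1 c = 1) by (unfold straighten_speed, Rdiv; ring).
  extensionality k; unfold straighten; rewrite Hm.
  destruct (coef_deg k); simpl; rewrite ?pow1; ring.
Qed.

Lemma straighten_Od t c : O_d d c -> 0 <= t <= 1 -> O_d d (straighten t c).
Proof.
  intros Hc Ht; destruct (Req_dec t 0) as [->|Ht0].
  { rewrite straighten_0 by assumption; apply line_coefs_Od, tangent_dir_sphere; assumption. }
  pose proof (straighten_speed_pos t c Hc Ht) as Hm.
  destruct Hc as [Hc3 Hknot]; split.
  - intros k Hk; unfold straighten; rewrite Hc3 by exact Hk; ring.
  - set (m := straighten_speed t c) in Hm.
    unfold is_poly_knot.
    replace (compf d (straighten t c))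
      with (fun x => (t - m / t) * c 0%nat + m / t * compf d c (t * x))
      by (extensionality x; symmetry; apply straighten_components; assumption).
    replace (compg d (straighten t c))
      with (fun x => (t - m / t) * c (d - 1)%nat + m / t * compg d c (t * x))
      by (extensionality x; symmetry; apply straighten_components; assumption).
    replace (comph d (straighten t c))
      with (fun x => (t - m / t) * c (2 * d - 1)%nat + m / t * comph d c (t * x))
      by (extensionality x; symmetry; apply straighten_components; assumption).
    apply injective_immersion_rescale; try apply derivable_peval; try assumption.
    apply Rmult_integral_contrapositive; split; [lra | apply Rinv_neq_0_compat, Ht0].
Qed.

Lemma Lim_inv_speed T D N (N_mono : forall r1 r2 y, r1 <= r2 -> N r1 y -> N r2 y)
  (Y : T -> nat -> R) x :
  (forall i, (i < 3 * d)%nat -> Lim T D N (fun p => Y p i) (x i)) -> 0 < speed2 x ->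
  Lim T D N (fun p => / speed (Y p)) (/ speed x).
Proof.
  intros HY Hpos.
  apply (Lim_comp T D N (fun p => speed (Y p)) _ Rinv).
  - apply (Lim_comp T D N (fun p => speed2 (Y p)) _ sqrt); [| apply continuity_pt_sqrt; lra].
    unfold speed2; repeat apply (Lim_plus T D N N_mono); apply (Lim_pow T D N N_mono), HY; lia.
  - apply (continuity_pt_inv (fun r => r)); [exact (derivable_continuous_pt _ _ (derivable_pt_id _))|].
    apply Rgt_not_eq, sqrt_lt_R0, Hpos.
Qed.

Lemma cont_tangent_dir : cont_on (3 * d) 3 (O_d d) tangent_dir.
Proof.
  apply cont_on_coords; intros x Hx i Hi.
  pose proof (Lim_inv_speed _ (O_d d) _ (nbhd_mono (3 * d) x) (fun y => y) x
                (fun i Hi => Lim_coord _ x _ i Hi) (speed2_pos x Hx)) as Hinv.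
  destruct i as [|[|[|i]]]; try lia; simpl tangent_dir; unfold Rdiv;
    (apply (Lim_mult _ _ _ (nbhd_mono (3 * d) x)); [apply Lim_coord; lia | exact Hinv]).
Qed.

Lemma cont_line_coefs : cont_on 3 (3 * d) sphere2 line_coefs.
Proof.
  apply cont_on_coords; intros x Hx k Hk; unfold line_coefs.
  nat_cases; (apply Lim_const || (apply Lim_coord; lia)).
Qed.

Lemma cont_straighten : cont_on_I (3 * d) (O_d d) straighten.
Proof.
  apply cont_on_I_coords; intros t x Ht Hx k Hk.
  pose proof (nbhdI_mono (3 * d) t x) as Nm.
  set (D := fun p : R * (nat -> R) => 0 <= fst p <= 1 /\ O_d d (snd p)).
  pose proof (Lim_timeI (3 * d) t x D) as Htime.
  pose proof (Lim_inv_speed _ D _ Nm snd x (fun i Hi => Lim_coordI _ t x _ i Hi)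
                (speed2_pos x Hx)) as Hinv.
  assert (Hspeed : Lim _ D (nbhdI (3 * d) t x)
                     (fun p => straighten_speed (fst p) (snd p)) (straighten_speed t x)).
  { unfold straighten_speed, Rdiv; apply (Lim_plus _ _ _ Nm); [| exact Htime].
    apply (Lim_mult _ _ _ Nm); [| exact Hinv].
    apply (Lim_comp _ _ _ _ _ (fun r => 1 - r) Htime), derivable_continuous_pt.
    exact (derivable_pt_minus _ _ t (derivable_pt_const 1 t) (derivable_pt_id t)). }
  unfold straighten; apply (Lim_mult _ _ _ Nm); [| apply Lim_coordI, Hk].
  destruct (coef_deg k) as [|j]; simpl rescale_weight; [exact Htime|].
  apply (Lim_mult _ _ _ Nm); [exact Hspeed | apply (Lim_pow _ _ _ Nm), Htime].
Qed.

End Knots.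

Theorem mainTheorem1 : forall d : nat, (3 <= d)%nat ->
  homotopy_equivalent (3 * d) (O_d d) 3 sphere2.
Proof.
  intros d Hd; exists (tangent_dir d), (line_coefs d).
  split; [intros; apply tangent_dir_sphere; assumption|].
  split; [intros; apply line_coefs_Od; assumption|].
  split; [apply cont_tangent_dir, Hd|].
  split; [apply cont_line_coefs, Hd|].
  split.
  - exists (straighten d); split; [apply cont_straighten, Hd|].
    split; [intros; apply straighten_Od; assumption|].
    split; [intros; apply straighten_0; assumption | intros; apply straighten_1].
  - apply homotopic_on_id; intros; apply tangent_dir_line_coefs; assumption.
Qed.
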